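(* Let $n>1$, $m\ge1$, let $P$ be a pivot path of $v\in Z_{n,m}$ and let $I=[p_1+1,p_2]$ be a $P$-interval. If $I$ contains $0$ or $m+1$, assume also that no step of $P$ is a left shift at $m$ applied to a vertex whose entry $m+1$ equals $0$, and no step of $P$ is a right shift at $0$ applied to a vertex whose entry $0$ equals $0$. Then: (1) if $P$ shifts left in $I$, then $d_I(P)=\sum_{i\in I} i\,v_i$; (2) if $P$ shifts right in $I$, then $d_I(P)=\sum_{i\in I}(m+1-i)v_i$.
   Context: Elements of $\mathbb{Z}_n$ are identified with representatives in $\{0,\dots,n-1\}$ (so $v_0,v_{m+1}$ are treated as such integers in sums). $Z_{n,m}$ has vertices $u=(u_0,\dots,u_{m+1})\in\mathbb{Z}_n\times\{-1,0,1\}^m\times\mathbb{Z}_n$ with $\sum u_i\equiv0\pmod n$. A step from $v$ to $u$ is a left shift at $i$ ($0\le i\le m$) if $u_j=v_j$ for $j\notin\{i,i+1\}$, $u_i=v_i+1$, $u_{i+1}=v_{i+1}-1$, and a right shift at $i$ if $u_i=v_i-1$, $u_{i+1}=v_{i+1}+1$ (arithmetic in coordinates $0,m+1$ in $\mathbb{Z}_n$); vertices are adjacent iff related by such a shift. For a path $P$ from $v$ to the all-zero vertex $0$: $0\le p\le m$ is an inner wall if no step is a shift at $p$; $-1$ is a wall if no step is a left shift at $0$; $m+1$ is a wall if no step is a right shift at $m$. A $p$-pivot path of $v$ is a shortest path from $v$ to $0$ among those having $p$ as a wall; a pivot path is a $p$-pivot path for some $p$. If $p_1<\dots<p_t$ are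 the inner walls of $P$, $p_0=-1$, $p_{t+1}=m+1$, the $P$-intervals are $[p_k+1,p_{k+1}]$, $0\le k\le t$. For a pivot path, all steps that are shifts at some $j$ with $[j,j+1]\subseteq I$ go in the same direction; $P$ shifts left (right) in $I$ if that direction is left (right). $d_I(P)$ is the number of steps of $P$ that are shifts at some $j$ with $[j,j+1]\subseteq I$. *)

From mathcomp Require Import all_boot all_order all_algebra.
Unset Printing Implicit Defensive.
Import Order.TTheory GRing.Theory Num.Theory.

(* A candidate vertex of Z_{n,m}: a vector (u_0, ..., u_{m+1}) of integers.
   Entries 0 and m+1 (elements of Z_n) are represented by their
   representatives in {0,...,n-1}. *)
Definition vertex (m : nat) := {ffun 'I_m.+2 -> int}.

Definition zerov (m : nat) : vertex m := [ffun => 0%R].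

Definition is_vertex (n m : nat) (u : vertex m) : Prop :=
  (forall i : 'I_m.+2, (i == 0 :> nat) || (i == m.+1 :> nat) ->
      (0 <= u i)%R /\ (u i < n%:Z)%R) /\
  (forall i : 'I_m.+2, (0 < i <= m)%N -> u i \in [:: (-1)%R; 0%R; 1%R]) /\
  (n%:Z %| (\sum_(i < m.+2) u i)%R)%Z.

Definition cadd (n m j : nat) (a d : int) : int :=
  if (j == 0) || (j == m.+1) then ((a + d) %% n%:Z)%Z else (a + d)%R.

Definition shift_by (n m i : nat) (dl dr : int) (x y : vertex m) : bool :=
  (i <= m) &&
  [forall j : 'I_m.+2,
     y j == (if (j == i :> nat) then cadd n m j (x j) dl
             else if (j == i.+1 :> nat) then cadd n m j (x j) dr
             else x j)].

Definition left_shift (n m i : nat) (x y : vertex m) : bool :=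
  shift_by n m i 1%R (-1)%R x y.

Definition right_shift (n m i : nat) (x y : vertex m) : bool :=
  shift_by n m i (-1)%R 1%R x y.

Definition shift_at (n m i : nat) (x y : vertex m) : bool :=
  left_shift n m i x y || right_shift n m i x y.

Definition adjacent (n m : nat) (x y : vertex m) : Prop :=
  exists i : nat, shift_at n m i x y.

(* A path is the nonempty sequence of its vertices x_0, ..., x_L;
   its steps are (x_k, x_{k+1}) for k < L, its length is L = size P - 1. *)
Definition vtx (m : nat) (P : seq (vertex m)) (k : nat) : vertex m :=
  nth (zerov m) P k.
Arguments vtx {m} P k.

Definition is_path_to_zero (n m : nat) (v : vertex m) (P : seq (vertex m)) : Prop :=
  (0 < size P)%N /\
  vtx P 0 = v /\
  vtx P (size P).-1 = zerov m /\
  (forall k, (k < size P)%N -> is_vertex n m (vtx P k)) /\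
  (forall k, (k.+1 < size P)%N -> adjacent n m (vtx P k) (vtx P k.+1)).

Definition inner_wall (n m : nat) (P : seq (vertex m)) (p : nat) : Prop :=
  (p <= m)%N /\
  forall k, (k.+1 < size P)%N -> ~~ shift_at n m p (vtx P k) (vtx P k.+1).

Definition is_wall (n m : nat) (P : seq (vertex m)) (p : int) : Prop :=
  if p == (-1)%R then
    forall k, (k.+1 < size P)%N -> ~~ left_shift n m 0 (vtx P k) (vtx P k.+1)
  else if p == (Posz m.+1) then
    forall k, (k.+1 < size P)%N -> ~~ right_shift n m m (vtx P k) (vtx P k.+1)
  else exists2 q : nat, p = Posz q & inner_wall n m P q.

Definition is_p_pivot_path (n m : nat) (v : vertex m) (p : int) (P : seq (vertex m)) : Prop :=
  (-1 <= p)%R /\ (p <= (Posz m.+1))%R /\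
  is_path_to_zero n m v P /\ is_wall n m P p /\
  forall Q, is_path_to_zero n m v Q -> is_wall n m Q p -> (size P <= size Q)%N.

Definition is_pivot_path (n m : nat) (v : vertex m) (P : seq (vertex m)) : Prop :=
  exists p : int, is_p_pivot_path n m v p P.

(* [a, b] is a P-interval, i.e. a = p_k + 1 and b = p_{k+1} for consecutive
   elements p_k < p_{k+1} of the list -1 = p_0 < p_1 < ... < p_t < p_{t+1} = m+1,
   where p_1 < ... < p_t are the inner walls of P. *)
Definition P_interval (n m : nat) (P : seq (vertex m)) (a b : nat) : Prop :=
  (a <= b)%N /\ (b <= m.+1)%N /\
  (a = 0%N \/ inner_wall n m P a.-1) /\
  (b = m.+1 \/ inner_wall n m P b) /\
  (forall q : nat, (a <= q < b)%N -> ~ inner_wall n m P q).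

Definition shifts_left_in (n m : nat) (P : seq (vertex m)) (a b : nat) : Prop :=
  forall k j, (k.+1 < size P)%N -> (a <= j)%N -> (j.+1 <= b)%N ->
    shift_at n m j (vtx P k) (vtx P k.+1) -> left_shift n m j (vtx P k) (vtx P k.+1).

Definition shifts_right_in (n m : nat) (P : seq (vertex m)) (a b : nat) : Prop :=
  forall k j, (k.+1 < size P)%N -> (a <= j)%N -> (j.+1 <= b)%N ->
    shift_at n m j (vtx P k) (vtx P k.+1) -> right_shift n m j (vtx P k) (vtx P k.+1).

Definition d_I (n m : nat) (P : seq (vertex m)) (a b : nat) : nat :=
  \sum_(k < (size P).-1)
     [exists j : 'I_m.+1, (a <= j)%N && (j.+1 <= b)%N &&
                          shift_at n m j (vtx P k) (vtx P k.+1)].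

Definition no_zero_wrap (n m : nat) (P : seq (vertex m)) : Prop :=
  forall k, (k.+1 < size P)%N ->
    ~ (left_shift n m m (vtx P k) (vtx P k.+1) /\ vtx P k ord_max = 0%R) /\
    ~ (right_shift n m 0 (vtx P k) (vtx P k.+1) /\ vtx P k ord0 = 0%R).

(* The weighted sum wsum_w(x) = \sum_(i in I) w_i x_i, with w_i = i for left
   shifts and w_i = m+1-i for right shifts, is a potential along P: a shift at
   j with [j, j+1] inside I, necessarily in the direction matching w, changes
   it by exactly -1 (the wrap-around modulo n at coordinates 0 and m+1 is
   harmless, as the weight there is 0 or the entry does not cross 0), and any
   other step leaves it unchanged.  Summing over the steps of P from v down
   to 0 gives d_I(P) = wsum_w(v). *)

From mathcomp Require Import all_boot all_order all_algebra.
Import Order.TTheory GRing.Theory Num.Theory.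
From mathcomp Require Import zify ring.
Local Open Scope ring_scope.

Section Potential.

Set Implicit Arguments.
Unset Strict Implicit.

Variables n m : nat.

Definition wsum (a b : nat) (w : nat -> int) (x : vertex m) : int :=
  \sum_(j < m.+2 | (a <= j <= b)%N) w j * x j.

Lemma shift_byP i dl dr (x y : vertex m) :
  shift_by n m i dl dr x y ->
  (i <= m)%N /\
  forall j : 'I_m.+2,
    y j = if j == i :> nat then cadd n m j (x j) dl
          else if j == i.+1 :> nat then cadd n m j (x j) dr
          else x j.
Proof. by case/andP=> im /forallP yE; split=> // j; apply/eqP. Qed.

Lemma cadd_inner (j : nat) c d :
  (0 < j <= m)%N -> cadd n m j c d = c + d.
Proof. by move=> jm; rewrite /cadd ifF //; apply/negbTE; lia. Qed.

Lemma cadd_small (j : nat) c d :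
  0 <= c + d < n%:Z -> cadd n m j c d = c + d.
Proof. by move=> cd; rewrite /cadd; case: ifP => // _; rewrite modz_small. Qed.

Lemma boundary_entry_range (x : vertex m) (j : 'I_m.+2) :
  is_vertex n m x -> (j == 0 :> nat) || (j == m.+1 :> nat) -> 0 <= x j < n%:Z.
Proof. by case=> xr _ /xr [*]; apply/andP. Qed.

(* The last two hypotheses say that the wrap-around modulo n at coordinates
   0 and m+1 is invisible to the weights. *)
Lemma wsum_shift_by a b w i dl dr (x y : vertex m) (i0 i1 : 'I_m.+2) :
  shift_by n m i dl dr x y -> i0 = i :> nat -> i1 = i.+1 :> nat ->
  (a <= i)%N -> (i < b)%N ->
  w i * cadd n m i (x i0) dl = w i * (x i0 + dl) ->
  w i.+1 * cadd n m i.+1 (x i1) dr = w i.+1 * (x i1 + dr) ->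
  wsum a b w y = wsum a b w x + w i * dl + w i.+1 * dr.
Proof.
move=> /shift_byP [_ yE] i0E i1E ai ib e0 e1.
have i10 : i1 != i0 by apply/eqP => /(congr1 val) /=; lia.
have I0 : (a <= i0 <= b)%N by lia.
have I1 : ((a <= i1 <= b) && (i1 != i0))%N by rewrite i10; lia.
rewrite /wsum (bigD1 i0) // (bigD1 i1) // [in RHS](bigD1 i0) // [in RHS](bigD1 i1) //=.
rewrite !yE i0E i1E eqxx ifF; last by apply/negbTE; lia.
rewrite eqxx e0 e1 -i1E -i0E.
rewrite (eq_bigr (fun j : 'I_m.+2 => w j * x j)); last first.
  move=> j /andP [/andP [_ j0] j1].
  by rewrite yE -i1E -i0E !val_eqE (negbTE j0) (negbTE j1).
ring.
Qed.

Lemma wsum_left_shift a b i (x y : vertex m) :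
  is_vertex n m x -> left_shift n m i x y -> (a <= i)%N -> (i < b)%N ->
  (i = m -> x ord_max <> 0) ->
  wsum a b (fun j => Posz j) y = wsum a b (fun j => Posz j) x - 1.
Proof.
move=> xV ls ai ib wrap.
have im : (i <= m)%N by case/andP: ls.
have i0lt : (i < m.+2)%N by lia.
have i1lt : (i.+1 < m.+2)%N by lia.
rewrite (wsum_shift_by (i0 := Ordinal i0lt) (i1 := Ordinal i1lt) ls) //.
- by rewrite intS; ring.
- have [i0 | ipos] := posnP i; first by rewrite [X in Posz X]i0 !mul0r.
  by rewrite cadd_inner //; lia.
- have [im' | iE] := ltnP i m; first by rewrite cadd_inner //; lia.
  have {}iE : i = m by lia.
  subst i; have -> : Ordinal i1lt = ord_max by apply: val_inj.
  have xr := boundary_entry_range (j := ord_max) xV (eqxx m.+1).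
  have xnz := wrap erefl.
  by rewrite cadd_small //; apply/andP; split; lia.
Qed.

Lemma wsum_right_shift a b i (x y : vertex m) :
  is_vertex n m x -> right_shift n m i x y -> (a <= i)%N -> (i < b)%N ->
  (i = 0%N -> x ord0 <> 0) ->
  wsum a b (fun j => Posz (m.+1 - j)) y = wsum a b (fun j => Posz (m.+1 - j)) x - 1.
Proof.
move=> xV rs ai ib wrap.
have im : (i <= m)%N by case/andP: rs.
have i0lt : (i < m.+2)%N by lia.
have i1lt : (i.+1 < m.+2)%N by lia.
rewrite (wsum_shift_by (i0 := Ordinal i0lt) (i1 := Ordinal i1lt) rs) //.
- by rewrite subSS subSn // intS; ring.
- have [i0 | ipos] := posnP i; last by rewrite cadd_inner //; lia.
  subst i; have -> : Ordinal i0lt = ord0 by apply: val_inj.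
  have xr := boundary_entry_range (j := ord0) xV isT.
  have xnz := wrap erefl.
  by rewrite cadd_small //; apply/andP; split; lia.
- have [im' | iE] := ltnP i m; first by rewrite cadd_inner //; lia.
  by rewrite (_ : (m.+1 - i.+1 = 0)%N) ?mul0r //; lia.
Qed.

Lemma wsum_shift_outside a b w i dl dr (x y : vertex m) :
  shift_by n m i dl dr x y -> (i.+1 < a)%N || (b < i)%N ->
  wsum a b w y = wsum a b w x.
Proof.
move=> /shift_byP [_ yE] iout; apply: eq_bigr => j jI.
by rewrite yE !ifF //; apply/negbTE; lia.
Qed.

Definition counted_step a b (P : seq (vertex m)) k : bool :=
  [exists j : 'I_m.+1, (a <= j)%N && (j.+1 <= b)%N &&
                       shift_at n m j (vtx P k) (vtx P k.+1)].

(* A shift at a.-1 or at b would be a shift at a wall of P. *)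
Lemma wsum_uncounted_step a b w (P : seq (vertex m)) k :
  P_interval n m P a b -> (k.+1 < size P)%N ->
  adjacent n m (vtx P k) (vtx P k.+1) -> ~~ counted_step a b P k ->
  wsum a b w (vtx P k.+1) = wsum a b w (vtx P k).
Proof.
move=> [_ [bm [aW [bW _]]]] kP [i sh] uncounted.
have [dl [dr sb]] : exists dl dr, shift_by n m i dl dr (vtx P k) (vtx P k.+1).
  by case/orP: sh => ?; [exists 1, (-1) | exists (-1), 1].
have im : (i <= m)%N by case/andP: sb.
apply: (wsum_shift_outside w sb).
have [ai | nai] := boolP ((a <= i) && (i.+1 <= b))%N.
  case/negP: uncounted; apply/existsP.
  by exists (Ordinal (im : (i < m.+1)%N)); rewrite /= ai.
have [iE | ia] := eqVneq i.+1 a.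
  case: aW => [| [_ W]]; first lia.
  by case/negP: (W k kP); rewrite -iE.
have [iE | ib] := eqVneq i b.
  case: bW => [| [_ W]]; first lia.
  by case/negP: (W k kP); rewrite -iE.
lia.
Qed.

Lemma d_I_eq_wsum a b w v (P : seq (vertex m)) :
  is_path_to_zero n m v P -> P_interval n m P a b ->
  (forall k, (k.+1 < size P)%N -> counted_step a b P k ->
     wsum a b w (vtx P k.+1) = wsum a b w (vtx P k) - 1) ->
  Posz (d_I n m P a b) = wsum a b w v.
Proof.
move=> [_ [P0 [PL [_ Padj]]]] PI counted.
have step k : (k < (size P).-1)%N ->
    Posz (counted_step a b P k)
    = - wsum a b w (vtx P k.+1) - - wsum a b w (vtx P k).
  move=> kP; have kP' : (k.+1 < size P)%N by lia.
  case: (boolP (counted_step a b P k)) => c.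
    by rewrite /= (counted k kP' c); ring.
  by rewrite /= (wsum_uncounted_step w PI kP' (Padj k kP') c); ring.
rewrite /d_I (big_morph Posz PoszD (erefl 0%:Z)).
rewrite -(big_mkord xpredT (fun k => Posz (counted_step a b P k))).
rewrite (telescope_sumr_eq (fun k => - wsum a b w (vtx P k)) _ (leq0n _));
  last by move=> k /andP [_ kP]; exact: step.
rewrite PL P0 /wsum big1 => [| j _]; last by rewrite ffunE mulr0.
by rewrite oppr0 sub0r opprK.
Qed.

End Potential.

Theorem lemma5p13 (n m : nat) (v : vertex m) (P : seq (vertex m)) (a b : nat) :
  (1 < n)%N -> (1 <= m)%N ->
  is_vertex n m v ->
  is_pivot_path n m v P ->
  P_interval n m P a b ->
  ((a = 0%N \/ b = m.+1) -> no_zero_wrap n m P) ->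
  (shifts_left_in n m P a b ->
     Posz (d_I n m P a b) = (\sum_(i < m.+2 | (a <= i <= b)%N) (Posz i) * v i)%R) /\
  (shifts_right_in n m P a b ->
     Posz (d_I n m P a b) = (\sum_(i < m.+2 | (a <= i <= b)%N) (Posz (m.+1 - i)) * v i)%R).
Proof.
move=> _ _ _ [p [_ [_ [Ppath _]]]] PI wrapfree.
have [_ [_ [_ [Pv _]]]] := Ppath.
have [_ [bm _]] := PI.
split=> shifts.
- apply: (d_I_eq_wsum (w := fun j => Posz j) Ppath PI).
  move=> k kP /existsP [j /andP [/andP [aj jb] sh]].
  have ls := shifts k j kP aj jb sh.
  apply: (wsum_left_shift (Pv k (ltnW kP)) ls aj jb) => jm x0.
  have bE : b = m.+1 by lia.
  have [W _] := wrapfree (or_intror bE) k kP.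
  by apply: W; split=> //; rewrite jm in ls.
- apply: (d_I_eq_wsum (w := fun j => Posz (m.+1 - j)) Ppath PI).
  move=> k kP /existsP [j /andP [/andP [aj jb] sh]].
  have rs := shifts k j kP aj jb sh.
  apply: (wsum_right_shift (Pv k (ltnW kP)) rs aj jb) => j0 x0.
  have aE : a = 0%N by lia.
  have [_ W] := wrapfree (or_introl aE) k kP.
  by apply: W; split=> //; rewrite j0 in rs.
Qed.
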